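(* Let $X = X_1 \times \dots \times X_d$ be a product of finite sets, and let $\big((\overline{Y}_S, \overline{Y}^{\,\circ}_S, F_S, A_S)\,:\, S \subseteq [d]\big)$ be an additive-restrictive system on $X$. Let $\delta$ be the density of $\overline{Y}^{\,\circ}_{\emptyset}$ in $X$, and let $|A|$ be the maximum of $|A_S|$ over $S\subseteq[d]$. Then for every $S \subseteq [d]$, the density of $\overline{Y}^{\,\circ}_{S}$ in $\overline{X}_{S}$ is at least $\delta^{2^{|S|}}|A|^{-3^{|S|}}$.
   Context: $[d]=\{1,\dots,d\}$. For $S \subseteq [d]$, $\overline{X}_S = \prod_{i=1}^d W_i$ where $W_i = X_i\times X_i$ if $i \in S$ and $W_i = X_i$ otherwise; $\pi_i$ is projection to the $i$-th factor, and on $X_i\times X_i$ the two projections are $\pi_0,\pi_1$. For $S_0\subseteq[d]$, $\pi_{S_0}$ is projection to the factors indexed by $S_0$. For $\bar x\in\overline{X}_S$ and $T\subseteq S$, with $U=S-T$, set $\widehat{x}(T)=\{\bar y\in\overline{X}_T : \pi_i(\bar y)\in\{\pi_0(\pi_i(\bar x)),\pi_1(\pi_i(\bar x))\}\text{ for } i\in U,\ \pi_{[d]-U}(\bar y)=\pi_{[d]-U}(\bar x)\}$. An additive-restrictive system is a family $(\overline{Y}_S,\overline{Y}^{\,\circ}_S,F_S,A_S)_{S\subseteq[d]}$ such that: each $A_S$ is an abelian group, $\overline{Y}^{\,\circ}_S\subseteq\overline{Y}_S\subseteq\overline{X}_S$, and $F_S:\overline{Y}_S\to A_S$ is a function with $F_S^{-1}(0)=\overline{Y}^{\,\circ}_S$;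 for nonempty $S$, $\overline{Y}_S=\{\bar x\in\overline{X}_S:\widehat{x}(T)\subseteq\overline{Y}^{\,\circ}_T\text{ for all } T\subsetneq S\}$; and (additivity) whenever $s\in S$ and $\bar x_1,\bar x_2,\bar x_3\in\overline{Y}_S$ agree in all coordinates other than $s$ and satisfy $\pi_s(\bar x_1)=(p_1,p_2)$, $\pi_s(\bar x_2)=(p_2,p_3)$, $\pi_s(\bar x_3)=(p_1,p_3)$ for some $p_1,p_2,p_3\in X_s$, we have $F_S(\bar x_1)+F_S(\bar x_2)=F_S(\bar x_3)$. *)

From HB Require Import structures.
From mathcomp Require Import all_boot all_order all_algebra.
Set Implicit Arguments. Unset Strict Implicit. Unset Printing Implicit Defensive.
Import Order.TTheory GRing.Theory Num.Theory.

Section ARS.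
Variables (d : nat) (X : 'I_d -> finType).

Definition W (S : {set 'I_d}) (i : 'I_d) : finType :=
  if i \in S then ((X i * X i)%type : finType) else X i.

Definition Xbar (S : {set 'I_d}) : finType := {dffun forall i : 'I_d, W S i}.

(* first / second component of a coordinate (both equal to the coordinate
   itself when i \notin S) *)
Definition pi0 (S : {set 'I_d}) (i : 'I_d) : W S i -> X i :=
  if i \in S as b return (Finite.sort (if b then ((X i * X i)%type : finType) else X i) -> X i)
  then fun p => p.1 else fun x => x.
Definition pi1 (S : {set 'I_d}) (i : 'I_d) : W S i -> X i :=
  if i \in S as b return (Finite.sort (if b then ((X i * X i)%type : finType) else X i) -> X i)
  then fun p => p.2 else fun x => x.

Definition xhat (S T : {set 'I_d}) (x : Xbar S) : {set Xbar T} :=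
  [set y : Xbar T | [forall i : 'I_d,
     if i \in S :\: T then
       (pi0 (y i) == pi0 (x i)) || (pi0 (y i) == pi1 (x i))
     else
       (pi0 (y i) == pi0 (x i)) && (pi1 (y i) == pi1 (x i))]].

Definition additive_restrictive_system
  (A : {set 'I_d} -> finZmodType)
  (Y Yo : forall S : {set 'I_d}, {set Xbar S})
  (F : forall S : {set 'I_d}, Xbar S -> A S) : Prop :=
  (forall S : {set 'I_d}, Yo S \subset Y S) /\
  (forall (S : {set 'I_d}) (x : Xbar S), x \in Y S -> ((F S x = 0)%R <-> x \in Yo S)) /\
  (forall S : {set 'I_d}, S != set0 ->
     forall x : Xbar S,
       x \in Y S <-> (forall T : {set 'I_d}, T \proper S -> xhat T x \subset Yo T)) /\
  (forall (S : {set 'I_d}) (s : 'I_d), s \in S ->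
     forall (x1 x2 x3 : Xbar S) (p1 p2 p3 : X s),
       x1 \in Y S -> x2 \in Y S -> x3 \in Y S ->
       (forall j, j != s -> x1 j = x2 j /\ x1 j = x3 j) ->
       pi0 (x1 s) = p1 -> pi1 (x1 s) = p2 ->
       pi0 (x2 s) = p2 -> pi1 (x2 s) = p3 ->
       pi0 (x3 s) = p1 -> pi1 (x3 s) = p3 ->
       (F S x1 + F S x2 = F S x3)%R).

(* density of B in Xbar S, as a rational (0 if Xbar S is empty) *)
Definition density (S : {set 'I_d}) (B : {set Xbar S}) : rat :=
  (#|B|%:R / #|Xbar S|%:R)%R.

End ARS.

From HB Require Import structures.
From mathcomp Require Import all_boot all_order all_algebra.
From mathcomp Require Import zify.
Set Implicit Arguments. Unset Strict Implicit. Unset Printing Implicit Defensive.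
Import Order.TTheory GRing.Theory Num.Theory.

(* Fix s in S and T = S :\ s.  A point of Xbar S is a
   point k of Xbar T together with a pair (p, q) of values at s, i.e. a pair
   of points upd k p, upd k q on the line of k through s; its faces containing
   s are indexed by the 3 ^ #|T| configurations [cfgs].  Treating these faces
   by increasing dimension, colour each point p of Yo T on a line by its
   colour for the smaller faces together with F (face (r, p)), where r is a
   fixed point of Yo T on the line with that same colour.  By additivity,
   F (r, p) + F (p, q) = F (r, q), so two points of the same colour span a
   point of Yo S.  There are at most |A| ^ 3 ^ #|T| colours, and
   Cauchy-Schwarz over lines and colours gives
   density (Yo S) >= density (Yo T) ^ 2 / |A| ^ 3 ^ #|T|. *)

Section Coordinates.
Variables (d : nat) (X : 'I_d -> finType).
Implicit Types (V : {set 'I_d}) (i : 'I_d).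

Definition Wpair V i (a : X i * X i) : W X V i :=
  if i \in V as b return Finite.sort (if b then ((X i * X i)%type : finType) else X i)
  then a else a.1.
Arguments Wpair : clear implicits.

Lemma pi0_Wpair V i a : pi0 (Wpair V i a) = a.1.
Proof. by rewrite /pi0 /Wpair; case: (i \in V). Qed.

Lemma pi1_Wpair V i a : pi1 (Wpair V i a) = if i \in V then a.2 else a.1.
Proof. by rewrite /pi1 /Wpair; case: (i \in V). Qed.

Lemma pi1_notin V i (x : W X V i) : i \notin V -> pi1 x = pi0 x.
Proof. by move: x; rewrite /pi1 /pi0 /W; case: (i \in V). Qed.

Lemma W_ext V i (x y : W X V i) : pi0 x = pi0 y -> pi1 x = pi1 y -> x = y.
Proof.
move: x y; rewrite /pi1 /pi0 /W; case: (i \in V) => /=; last by move=> a c ->.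
by move=> [a b] [c e] /= -> ->.
Qed.

Lemma Xbar_ext V (x y : Xbar X V) :
  (forall i, pi0 (x i) = pi0 (y i) /\ pi1 (x i) = pi1 (y i)) -> x = y.
Proof. by move=> xy; apply/ffunP => i; have [] := xy i; apply: W_ext. Qed.

Definition of_pairs V (u : forall i, X i * X i) : Xbar X V :=
  [ffun i => Wpair V i (u i)].

Definition pairs_of V (x : Xbar X V) i : X i * X i := (pi0 (x i), pi1 (x i)).

Lemma pi0_of_pairs V u i : pi0 (of_pairs V u i) = (u i).1.
Proof. by rewrite ffunE pi0_Wpair. Qed.

Lemma pi1_of_pairs V u i : pi1 (of_pairs V u i) = if i \in V then (u i).2 else (u i).1.
Proof. by rewrite ffunE pi1_Wpair. Qed.

Lemma xhatP V V' (x : Xbar X V) (v : Xbar X V') :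
  reflect (forall i, if i \in V :\: V' then
       (pi0 (v i) == pi0 (x i)) || (pi0 (v i) == pi1 (x i))
     else (pi0 (v i) == pi0 (x i)) && (pi1 (v i) == pi1 (x i)))
   (v \in xhat V' x).
Proof. by rewrite inE; apply: forallP. Qed.

Lemma xhat_id V (x v : Xbar X V) : v \in xhat V x -> v = x.
Proof.
move/xhatP=> vx; apply: Xbar_ext => i; move: (vx i); rewrite setDv inE.
by case/andP => /eqP -> /eqP ->.
Qed.

Lemma card_W V i : #|W X V i| = if i \in V then #|X i| ^ 2 else #|X i|.
Proof. by rewrite /W; case: (i \in V); rewrite ?card_prod. Qed.

Lemma card_Xbar V : #|Xbar X V| = \prod_i #|W X V i|.
Proof. by rewrite card_dep_ffun foldrE big_map big_enum. Qed.

Lemma card_Xbar_setD1 V s : s \in V -> #|Xbar X V| = #|Xbar X (V :\ s)| * #|X s|.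
Proof.
move=> sV; rewrite !card_Xbar (bigD1 s) // [in RHS](bigD1 s) //= !card_W sV setD11.
rewrite (eq_bigr (fun i => #|W X (V :\ s) i|)) => [|i ne_is]; last first.
  by rewrite !card_W !inE ne_is.
by rewrite mulnAC expnS expn1.
Qed.

Lemma density_ge0 V (B : {set Xbar X V}) : (0 <= density B)%R.
Proof. by rewrite /density divr_ge0. Qed.

End Coordinates.

Lemma sqr_sum_le_card_sum_sqr (I : finType) (P : {pred I}) (a : I -> nat) :
  (\sum_(i in P) a i) ^ 2 <= #|P| * \sum_(i in P) a i ^ 2.
Proof.
rewrite -(leq_pmul2l (isT : 0 < 2)) expnS expn1 big_distrlr /= big_distrr /=.
apply: (@leq_trans (\sum_(i in P) \sum_(j in P) (a i ^ 2 + a j ^ 2))).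
  apply: leq_sum => i _; rewrite big_distrr /=; apply: leq_sum => j _.
  exact: (nat_Cauchy _ _).1.
under eq_bigr do rewrite big_split /= sum_nat_const.
by rewrite big_split /= -big_distrr /= sum_nat_const mul2n -addnn.
Qed.

Definition collisions (T U : finType) (B : {set T}) (g : T -> U) : {set T * T} :=
  [set yy in setX B B | g yy.1 == g yy.2].

Lemma sqr_card_le_collisions (T U : finType) (B : {set T}) (g : T -> U) :
  #|B| ^ 2 <= #|collisions B g| * #|g @: B|.
Proof.
pose fibre v := #|[set y in B | g y == v]|.
have sum_fibres (h : T -> nat) :
    \sum_(y in B) h y = \sum_(v in g @: B) \sum_(y in B | g y == v) h y.
  by apply: partition_big => y yB; apply: imset_f.
have cardB : #|B| = \sum_(v in g @: B) fibre v.
  rewrite -sum1_card sum_fibres; apply: eq_bigr => v _.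
  by rewrite /fibre -sum1_card; apply: eq_bigl => y; rewrite !inE.
have card_coll : #|collisions B g| = \sum_(v in g @: B) fibre v ^ 2.
  rewrite -sum1_card.
  transitivity (\sum_(y1 in B) \sum_(y2 in B | g y2 == g y1) 1).
    rewrite pair_big_dep /=; apply: eq_bigl => -[y1 y2]; rewrite !inE /=.
    by rewrite [g y2 == _]eq_sym andbA.
  transitivity (\sum_(y1 in B) fibre (g y1)).
    apply: eq_bigr => y1 _; rewrite /fibre -sum1_card.
    by apply: eq_bigl => y2; rewrite !inE.
  rewrite sum_fibres; apply: eq_bigr => v _.
  rewrite (eq_bigr (fun _ => fibre v)); last by move=> y /andP [_ /eqP ->].
  rewrite sum_nat_const expnS expn1; congr (_ * _).
  by apply: eq_card => y; rewrite !inE.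
by rewrite cardB card_coll mulnC sqr_sum_le_card_sum_sqr.
Qed.

Lemma exp2_div_exp3S (R : fieldType) (x y : R) n :
  (x ^+ (2 ^ n.+1) / y ^+ (3 ^ n.+1)
   = (x ^+ (2 ^ n) / y ^+ (3 ^ n)) ^+ 2 / y ^+ (3 ^ n))%R.
Proof.
rewrite !expnSr !exprM expr_div_n; set z := (y ^+ (3 ^ n))%R.
by rewrite [(z ^+ 3)%R]exprSr invfM mulrA.
Qed.

Section AdditiveRestrictiveSystem.
Variables (d : nat) (X : 'I_d -> finType) (A : {set 'I_d} -> finZmodType)
  (Y Yo : forall V : {set 'I_d}, {set Xbar X V})
  (F : forall V : {set 'I_d}, Xbar X V -> A V).
Arguments Y : clear implicits.
Arguments Yo : clear implicits.
Arguments F : clear implicits.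
Implicit Types (V : {set 'I_d}) (i : 'I_d).

Hypothesis Yo_sub_Y : forall V, Yo V \subset Y V.
Hypothesis F_eq0 : forall V (x : Xbar X V), x \in Y V -> (F V x = 0%R <-> x \in Yo V).
Hypothesis Y_faces : forall V, V != set0 -> forall x : Xbar X V,
  x \in Y V <-> (forall V', V' \proper V -> xhat V' x \subset Yo V').
Hypothesis F_add : forall V (s : 'I_d), s \in V ->
  forall (x1 x2 x3 : Xbar X V) (p1 p2 p3 : X s),
    x1 \in Y V -> x2 \in Y V -> x3 \in Y V ->
    (forall j, j != s -> x1 j = x2 j /\ x1 j = x3 j) ->
    pi0 (x1 s) = p1 -> pi1 (x1 s) = p2 ->
    pi0 (x2 s) = p2 -> pi1 (x2 s) = p3 ->
    pi0 (x3 s) = p1 -> pi1 (x3 s) = p3 ->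
    (F V x1 + F V x2 = F V x3)%R.

Lemma xhat_sub_Yo V V' (x : Xbar X V) :
  x \in Yo V -> V' \subset V -> xhat V' x \subset Yo V'.
Proof.
move=> xYo; rewrite subEproper => /orP [/eqP eV'V | ltV'V].
  by subst V'; apply/subsetP => v /xhat_id ->.
have V_neq0 : V != set0.
  by rewrite -proper0; apply: sub_proper_trans (sub0set V') ltV'V.
exact: (Y_faces V_neq0 x).1 (subsetP (Yo_sub_Y V) x xYo) V' ltV'V.
Qed.

Definition cardA := (\max_V #|A V|)%N.

Lemma leq_card_cardA V : #|A V| <= cardA.
Proof. exact: (leq_bigmax (F := fun V => #|A V|)). Qed.

Lemma cardA_gt0 : 0 < cardA.
Proof. by apply: leq_trans (leq_card_cardA set0); apply/card_gt0P; exists 0%R. Qed.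

Definition encode V (a : A V) : 'I_cardA := widen_ord (leq_card_cardA V) (enum_rank a).

Lemma encode_inj V : injective (@encode V).
Proof. by move=> a b /(congr1 val) eq_ab; apply/enum_rank_inj/ord_inj. Qed.

Section Step.
Variables (S : {set 'I_d}) (s : 'I_d).
Hypothesis sS : s \in S.
Local Notation T := (S :\ s).
Implicit Types (k : Xbar X T) (p q r : X s).

Lemma s_notin_T : s \notin T.
Proof. by rewrite setD11. Qed.

Definition set_s (u : forall i, X i * X i) (a : X s * X s) : forall i, X i * X i :=
  @dfwith _ (fun i => (X i * X i)%type) u s a.

Lemma set_s_s u a : set_s u a s = a.
Proof. exact: dfwith_in. Qed.

Lemma set_s_ne u a i : i != s -> set_s u a i = u i.
Proof. by move=> ne_is; apply: dfwith_out; rewrite eq_sym. Qed.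

Definition upd k p : Xbar X T := of_pairs T (set_s (pairs_of k) (p, p)).

Lemma pi0_upd_s k p : pi0 (upd k p s) = p.
Proof. by rewrite pi0_of_pairs set_s_s. Qed.

Lemma pi1_upd_s k p : pi1 (upd k p s) = p.
Proof. by rewrite pi1_of_pairs set_s_s (negbTE s_notin_T). Qed.

Lemma pi0_upd_ne k p i : i != s -> pi0 (upd k p i) = pi0 (k i).
Proof. by move=> ne_is; rewrite pi0_of_pairs set_s_ne. Qed.

Lemma pi1_upd_ne k p i : i != s -> pi1 (upd k p i) = pi1 (k i).
Proof.
move=> ne_is; rewrite pi1_of_pairs set_s_ne //=.
by case: ifP => // /negbT /pi1_notin ->.
Qed.

Lemma upd_upd k p r : upd (upd k p) r = upd k r.
Proof.
apply: Xbar_ext => i; have [->|ne_is] := eqVneq i s.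
  by rewrite !pi0_upd_s !pi1_upd_s.
by rewrite !pi0_upd_ne // !pi1_upd_ne.
Qed.

Lemma upd_pi0 k : upd k (pi0 (k s)) = k.
Proof.
apply: Xbar_ext => i; have [->|ne_is] := eqVneq i s.
  by rewrite pi0_upd_s pi1_upd_s (pi1_notin _ s_notin_T).
by rewrite pi0_upd_ne // pi1_upd_ne.
Qed.

Definition cfg := {dffun forall i : 'I_d, option bool}.
Implicit Types (c : cfg) (D : {set cfg}).

Definition cfgs : {set cfg} :=
  setXn (fun i => if i \in T then [set: option bool] else [set None]).

Lemma cfgsP c : reflect (forall i, i \notin T -> c i = None) (c \in cfgs).
Proof.
apply: (iffP setXnP) => cP i.
  by move=> iNT; move: (cP i); rewrite (negbTE iNT) inE => /eqP.
by case: ifP => [_|/negbT /cP ->]; rewrite inE.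
Qed.

Lemma card_cfgs : #|cfgs| = 3 ^ #|T|.
Proof.
rewrite cardsXn (eq_bigr (fun i => if i \in T then 3 else 1)).
  by rewrite -big_mkcond prod_nat_const.
by move=> i _; case: ifP => _; rewrite ?cards1 // cardsT card_option card_bool.
Qed.

Definition face_set c : {set 'I_d} := [set i in S | c i == None].

(* [face k c p q] is the face of the point (k; p, q) of [Xbar X S] in which
   each coordinate i with [c i = Some b] is frozen to its b-th component. *)
Definition face_pairs k c p q : forall i, X i * X i :=
  set_s (fun i => if c i is Some b then
                    let a := if b then pi1 (k i) else pi0 (k i) in (a, a)
                  else pairs_of k i) (p, q).

Definition face k c p q : Xbar X (face_set c) :=
  of_pairs (face_set c) (face_pairs k c p q).

Lemma face_pairs_s k c p q : face_pairs k c p q s = (p, q).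
Proof. exact: set_s_s. Qed.

Lemma face_pairs_ne k c p q i : i != s -> face_pairs k c p q i =
  if c i is Some b then let a := if b then pi1 (k i) else pi0 (k i) in (a, a)
  else pairs_of k i.
Proof. exact: set_s_ne. Qed.

Lemma face_set_sub c : face_set c \subset S.
Proof. by apply/subsetP => i; rewrite inE => /andP []. Qed.

Lemma s_in_face_set c : c \in cfgs -> s \in face_set c.
Proof. by move/cfgsP/(_ s s_notin_T) => cs; rewrite inE sS cs eqxx. Qed.

Lemma xhat_face_s k c p q V (v : Xbar X V) :
  c \in cfgs -> V \subset face_set c -> s \in V -> v \in xhat V (face k c p q) ->
  exists2 c', c' \in cfgs & face_set c' = V /\ v = of_pairs V (face_pairs k c' p q).
Proof.
move=> cP /subsetP Vc sV /xhatP vx.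
have cN := cfgsP _ cP.
have inV i : i \in V -> (i \in S) && (c i == None) by move/Vc; rewrite inE.
pose c' : cfg := [ffun i => if (i \in S) && (i \notin V) then
   (if c i is Some b then Some b else Some (pi0 (v i) != pi0 (k i))) else None].
exists c'; last split.
- apply/cfgsP => i iNT; rewrite ffunE; case: ifP => // /andP [iS iNV].
  by move: iNT; rewrite !inE iS andbT negbK => /eqP eis; rewrite eis sV in iNV.
- apply/setP => i; rewrite !inE ffunE.
  case iS: (i \in S); case iV: (i \in V) => //=; first by case: (c i).
  by move: (inV i iV); rewrite iS.
apply: Xbar_ext => i; rewrite pi0_of_pairs pi1_of_pairs.
have [-> | ne_is] := eqVneq i s.
  move: (vx s); rewrite /face pi0_of_pairs pi1_of_pairs !face_pairs_s s_in_face_set //.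
  by rewrite !inE sV /= => /andP [/eqP -> /eqP ->].
move: (vx i); rewrite /face !pi0_of_pairs !pi1_of_pairs !face_pairs_ne // /c' ffunE !inE.
case iS: (i \in S); case iV: (i \in V); case ci: (c i) => [b|] /=; rewrite ?ne_is ?ci //=.
- by move: (inV i iV); rewrite ci andbF.
- by case/andP => /eqP -> /eqP ->.
- by case/andP => /eqP -> /eqP ->.
- rewrite (pi1_notin (v i)) ?iV //.
  by have [->|_] := eqVneq (pi0 (v i)) (pi0 (k i)); [|move=> /= /eqP ->].
- by move: (inV i iV); rewrite iS.
- by move: (inV i iV); rewrite iS.
- by rewrite cN // !inE iS andbF in ci.
- by case/andP => /eqP -> /eqP ->.
Qed.

Lemma xhat_face_notin k c p q V (v : Xbar X V) :
  c \in cfgs -> V \subset face_set c -> s \notin V -> v \in xhat V (face k c p q) ->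
  (pi0 (v s) = p \/ pi0 (v s) = q) /\ v \in xhat V (upd k (pi0 (v s))).
Proof.
move=> cP /subsetP Vc sNV /xhatP vx.
have cN := cfgsP _ cP.
have inV i : i \in V -> (i \in S) && (c i == None) by move/Vc; rewrite inE.
split.
  move: (vx s); rewrite /face pi0_of_pairs pi1_of_pairs face_pairs_s s_in_face_set //.
  by rewrite !inE (negbTE sNV) sS (cN _ s_notin_T) /= => /orP [] /eqP ->; [left|right].
apply/xhatP => i; have [-> | ne_is] := eqVneq i s.
  rewrite !inE eqxx /= andbF /= pi0_upd_s pi1_upd_s eqxx /=.
  by rewrite (pi1_notin _ sNV).
rewrite pi0_upd_ne // pi1_upd_ne //.
move: (vx i); rewrite /face !pi0_of_pairs !pi1_of_pairs !face_pairs_ne // !inE ne_is.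
case iS: (i \in S); case iV: (i \in V); case ci: (c i) => [b|] /=; rewrite ?ci //=.
- by move: (inV i iV); rewrite ci andbF.
- by case/andP => /eqP -> _; case: b {ci}; rewrite eqxx ?orbT.
- by move: (inV i iV); rewrite iS.
- by move: (inV i iV); rewrite iS.
- by rewrite cN // !inE iS andbF in ci.
- case/andP => /eqP -> /eqP ->; rewrite eqxx /=.
  by rewrite (pi1_notin (k i)) // !inE iS andbF.
Qed.

Definition lower_faces_in_Yo k c p q :=
  forall c', c' \in cfgs -> #|face_set c'| < #|face_set c| ->
    face k c' p q \in Yo (face_set c').

Lemma face_in_Y k c p q : c \in cfgs -> upd k p \in Yo T -> upd k q \in Yo T ->
  lower_faces_in_Yo k c p q -> face k c p q \in Y (face_set c).
Proof.
move=> cP kp kq lower.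
have c_neq0 : face_set c != set0 by apply/set0Pn; exists s; apply: s_in_face_set.
apply/(Y_faces c_neq0) => V ltVc; apply/subsetP => v vx.
have leVc := proper_sub ltVc.
have [sV | sNV] := boolP (s \in V).
  have [c' c'P [eV ->]] := xhat_face_s cP leVc sV vx.
  by subst V; apply: lower c'P (proper_card ltVc).
have [r_pq vr] := xhat_face_notin cP leVc sNV vx.
have VT : V \subset T.
  apply/subsetP => i iV; rewrite !inE (subsetP (subset_trans leVc (face_set_sub c))) //.
  by rewrite andbT; apply: contraNneq sNV => <-.
have kr : upd k (pi0 (v s)) \in Yo T by case: r_pq => ->.
exact: subsetP (xhat_sub_Yo kr VT) v vr.
Qed.

Lemma face_additive k c r p q : c \in cfgs ->
  face k c r p \in Y (face_set c) -> face k c p q \in Y (face_set c) ->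
  face k c r q \in Y (face_set c) ->
  (F _ (face k c r p) + F _ (face k c p q) = F _ (face k c r q))%R.
Proof.
move=> cP Yrp Ypq Yrq; have sc := s_in_face_set cP.
apply: (F_add sc Yrp Ypq Yrq).
- by move=> j ne_js; rewrite /face !ffunE !face_pairs_ne.
all: by rewrite /face ?pi0_of_pairs ?pi1_of_pairs face_pairs_s ?sc.
Qed.

Lemma face_in_Yo_cocycle k c r p q : c \in cfgs ->
  upd k r \in Yo T -> upd k p \in Yo T -> upd k q \in Yo T ->
  lower_faces_in_Yo k c r p -> lower_faces_in_Yo k c p q -> lower_faces_in_Yo k c r q ->
  F _ (face k c r p) = F _ (face k c r q) -> face k c p q \in Yo (face_set c).
Proof.
move=> cP kr kp kq lrp lpq lrq eqF.
have Ypq := face_in_Y cP kp kq lpq.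
apply/(F_eq0 Ypq).1.
have := face_additive cP (face_in_Y cP kr kp lrp) Ypq (face_in_Y cP kr kq lrq).
by rewrite eqF -[in RHS](addr0 (F _ _)) => /addrI.
Qed.

Definition good_coloring D (C : Type) (col : Xbar X T -> X s -> C) :=
  forall k p q, upd k p \in Yo T -> upd k q \in Yo T -> col k p = col k q ->
    forall c, c \in D -> face k c p q \in Yo (face_set c).

Definition down_closed D :=
  forall c c', c \in D -> c' \in cfgs -> #|face_set c'| < #|face_set c| -> c' \in D.

Definition rep (C : eqType) (col : Xbar X T -> X s -> C) k p : X s :=
  odflt p [pick q | (upd k q \in Yo T) && (col k q == col k p)].

Lemma rep_spec (C : eqType) (col : Xbar X T -> X s -> C) k p : upd k p \in Yo T ->
  upd k (rep col k p) \in Yo T /\ col k (rep col k p) = col k p.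
Proof.
move=> kp; rewrite /rep; case: pickP => [q /andP [kq /eqP] // | /(_ p)].
by rewrite kp eqxx.
Qed.

Lemma rep_eq (C : eqType) (col : Xbar X T -> X s -> C) k p q :
  upd k p \in Yo T -> col k p = col k q -> rep col k p = rep col k q.
Proof.
move=> kp eq_col; rewrite /rep -eq_col; case: pickP => // /(_ p).
by rewrite kp eqxx.
Qed.

Lemma good_coloring_setU1 D (C : finType) (col : Xbar X T -> X s -> C) c :
  c \in cfgs -> (forall c', c' \in cfgs -> #|face_set c'| < #|face_set c| -> c' \in D) ->
  good_coloring D col ->
  good_coloring (c |: D) (fun k p => (col k p, encode (F _ (face k c (rep col k p) p)))).
Proof.
move=> cP lowD colD k p q kp kq /eqP; rewrite xpair_eqE.
case/andP => /eqP eq_col /eqP eq_enc c1.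
case/setU1P => [-> | c1D]; last exact: colD kp kq eq_col c1 c1D.
have [kr eq_r] := rep_spec col kp.
have lower a b : upd k a \in Yo T -> upd k b \in Yo T -> col k a = col k b ->
    lower_faces_in_Yo k c a b.
  by move=> ka kb eq_ab c' c'P lt; apply: colD ka kb eq_ab c' (lowD c' c'P lt).
apply: (face_in_Yo_cocycle cP kr kp kq (lower _ _ kr kp eq_r) (lower _ _ kp kq eq_col)
  (lower _ _ kr kq (etrans eq_r eq_col))).
by apply: encode_inj; rewrite eq_enc -(rep_eq kp eq_col).
Qed.

Lemma good_coloring_exists D : D \subset cfgs -> down_closed D ->
  exists (C : finType) (col : Xbar X T -> X s -> C),
    #|C| <= cardA ^ #|D| /\ good_coloring D col.
Proof.
move cardD : #|D| => n; elim: n D cardD => [|n IH] D cardD DP Dcl.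
  exists unit, (fun _ _ => tt); split; first by rewrite card_unit.
  by move=> k p q _ _ _ c; move/eqP: cardD; rewrite cards_eq0 => /eqP ->; rewrite inE.
have [c0 c0D] : exists c0, c0 \in D by apply/set0Pn; rewrite -cards_eq0 cardD.
have [c cD cmax] : exists2 c, c \in D &
    forall c', c' \in D -> #|face_set c'| <= #|face_set c|.
  by case: (arg_maxnP (fun c => #|face_set c|) c0D) => c; exists c.
have cardD' : #|D :\ c| = n by move: cardD; rewrite (cardsD1 c) cD => -[].
have D'P : D :\ c \subset cfgs by apply: subset_trans DP; apply: subsetDl.
have lowD' c' : c' \in cfgs -> #|face_set c'| < #|face_set c| -> c' \in D :\ c.
  move=> c'P lt; rewrite !inE (Dcl c c' cD c'P lt) andbT.
  by apply: contraTneq lt => ->; rewrite ltnn.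
have D'cl : down_closed (D :\ c).
  move=> c1 c' /setD1P [_ c1D] c'P lt; apply: lowD' c'P (leq_trans lt (cmax c1 c1D)).
have [C [col [cardC colD']]] := IH _ cardD' D'P D'cl.
exists (C * 'I_cardA)%type.
exists (fun k p => (col k p, encode (F _ (face k c (rep col k p) p)))).
split; first by rewrite card_prod card_ord expnSr leq_mul2r cardC orbT.
by rewrite -(setD1K cD); apply: good_coloring_setU1 (subsetP DP c cD) lowD' colD'.
Qed.

Definition ctop : cfg := [ffun => None].

Lemma ctop_in_cfgs : ctop \in cfgs.
Proof. by apply/cfgsP => i _; rewrite ffunE. Qed.

Lemma face_set_top : face_set ctop = S.
Proof. by apply/setP => i; rewrite !inE ffunE eqxx andbT. Qed.

Definition join k p q : Xbar X S := of_pairs S (face_pairs k ctop p q).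

Lemma join_in_Yo (C : Type) (col : Xbar X T -> X s -> C) k p q :
  good_coloring cfgs col -> upd k p \in Yo T -> upd k q \in Yo T -> col k p = col k q ->
  join k p q \in Yo S.
Proof.
move=> colP kp kq eq_col.
by have := colP k p q kp kq eq_col ctop ctop_in_cfgs; rewrite /face face_set_top.
Qed.

Lemma eq_upd k k' r :
  (forall i, i != s -> pi0 (k i) = pi0 (k' i)) ->
  (forall i, i \in T -> pi1 (k i) = pi1 (k' i)) -> upd k r = upd k' r.
Proof.
move=> e0 e1; apply: Xbar_ext => i; have [->|ne_is] := eqVneq i s.
  by rewrite !pi0_upd_s !pi1_upd_s.
rewrite !pi0_upd_ne // !pi1_upd_ne // e0 //; split=> //.
by have [/e1 //|iNT] := boolP (i \in T); rewrite !(pi1_notin _ iNT) e0.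
Qed.

Lemma join_inj k k' p p' q q' : join k p q = join k' p' q' ->
  upd k p = upd k' p' /\ upd k q = upd k' q'.
Proof.
move=> e; have pi_join b i : (if b then pi1 (join k p q i) else pi0 (join k p q i))
    = (if b then pi1 (join k' p' q' i) else pi0 (join k' p' q' i)) by rewrite e.
have e0 i : i != s -> pi0 (k i) = pi0 (k' i).
  by move=> ne_is; have := pi_join false i; rewrite !pi0_of_pairs !face_pairs_ne // ffunE.
have e1 i : i \in T -> pi1 (k i) = pi1 (k' i).
  case/setD1P => ne_is iS; have := pi_join true i.
  by rewrite !pi1_of_pairs iS !face_pairs_ne // ffunE.
have := pi_join false s; have := pi_join true s.
rewrite !pi0_of_pairs !pi1_of_pairs sS !face_pairs_s /= => <- <-.
by split; apply: eq_upd.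
Qed.

Lemma card_collisions_le (C : finType) (col : Xbar X T -> X s -> C) ps :
  good_coloring cfgs col ->
  #|collisions (Yo T) (fun y => (upd y ps, col (upd y ps) (pi0 (y s))))| <= #|Yo S|.
Proof.
move=> colP; set g := fun y => _.
have updK y : upd (upd y ps) (pi0 (y s)) = y by rewrite upd_upd upd_pi0.
have collP y1 y2 : (y1, y2) \in collisions (Yo T) g ->
    [/\ y1 \in Yo T, y2 \in Yo T, upd y1 ps = upd y2 ps &
        col (upd y1 ps) (pi0 (y1 s)) = col (upd y1 ps) (pi0 (y2 s))].
  rewrite !inE /= => /andP [/andP [y1T y2T] /eqP [e_line e_col]].
  by split=> //; rewrite e_col e_line.
pose h (yy : Xbar X T * Xbar X T) := join (upd yy.1 ps) (pi0 (yy.1 s)) (pi0 (yy.2 s)).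
rewrite -(@card_in_imset _ _ h).
  apply: subset_leq_card; apply/subsetP => _ /imsetP [[y1 y2] yy_coll ->].
  have [y1T y2T e_line e_col] := collP _ _ yy_coll.
  by apply: join_in_Yo colP _ _ e_col; [rewrite updK | rewrite e_line updK].
move=> [y1 y2] [y1' y2'] /collP [_ _ e_line _] /collP [_ _ e_line' _] /join_inj [].
by rewrite /= !updK e_line e_line' !updK => -> ->.
Qed.

Lemma card_lines_le ps : #|[set upd y ps | y : Xbar X T]| * #|X s| <= #|Xbar X T|.
Proof.
rewrite -cardsT -cardsX; apply: (@leq_card_in _ _ (fun kp => upd kp.1 kp.2)).
move=> [k p] [k' p'] /setXP [/imsetP [y _ ->] _] /setXP [/imsetP [y' _ ->] _] /= e.
have ep : p = p' by have := congr1 (fun x : Xbar X T => pi0 (x s)) e; rewrite !pi0_upd_s.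
by rewrite -ep in e *; have := congr1 (upd^~ ps) e; rewrite !upd_upd => ->.
Qed.

Lemma card_Yo_step :
  #|Yo T| ^ 2 * #|Xbar X S| <= #|Yo S| * #|Xbar X T| ^ 2 * cardA ^ (3 ^ #|T|).
Proof.
case: (set_0Vmem (Yo T)) => [-> | [y0 _]]; first by rewrite cards0.
set ps := pi0 (y0 s).
have [C [col [cardC colP]]] :=
  @good_coloring_exists cfgs (subxx _) (fun _ _ _ c'P _ => c'P).
rewrite card_cfgs in cardC.
set L := [set upd y ps | y : Xbar X T].
pose g y := (upd y ps, col (upd y ps) (pi0 (y s))).
have card_img : #|g @: Yo T| <= #|L| * #|C|.
  rewrite -cardsT -cardsX; apply: subset_leq_card; apply/subsetP => _ /imsetP [y _ ->].
  by rewrite inE /= in_setT andbT; apply: imset_f.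
have sqrYoT : #|Yo T| ^ 2 <= #|Yo S| * (#|L| * #|C|).
  apply: leq_trans (sqr_card_le_collisions _ g) _.
  exact: leq_mul (card_collisions_le ps colP) card_img.
have arith (y l c n m K : nat) :
    c <= K -> l * m <= n -> y * (l * c) * (n * m) <= y * n ^ 2 * K.
  move=> cK lmn; rewrite (_ : _ * _ = y * c * n * (l * m)); last by lia.
  by rewrite (_ : _ * K = y * K * n * n); [rewrite !leq_mul | lia].
rewrite (card_Xbar_setD1 _ sS); apply: leq_trans (leq_mul sqrYoT (leqnn _)) _.
exact: arith cardC (card_lines_le ps).
Qed.

Lemma density_step :
  (density (Yo T) ^+ 2 / cardA%:R ^+ (3 ^ #|T|) <= density (Yo S))%R.
Proof.
rewrite /density; case: (posnP #|Yo T|) => [-> | YoT_gt0].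
  by rewrite mul0r expr0n mul0r divr_ge0.
have XT_gt0 : 0 < #|Xbar X T| := leq_trans YoT_gt0 (max_card _).
have Xs_gt0 : 0 < #|X s|.
  by have [y _] := card_gt0P XT_gt0; apply/card_gt0P; exists (pi0 (y s)).
have XS_gt0 : 0 < #|Xbar X S| by rewrite (card_Xbar_setD1 _ sS) muln_gt0 XT_gt0.
have M_gt0 : 0 < #|Xbar X T| ^ 2 * cardA ^ (3 ^ #|T|).
  by rewrite muln_gt0 !expn_gt0 XT_gt0 cardA_gt0.
rewrite -natrX expr_div_n -mulrA -invfM -!natrX -natrM.
rewrite ler_pdivrMr ?ltr0n // mulrAC ler_pdivlMr ?ltr0n //.
rewrite -!natrM ler_nat mulnA.
exact: card_Yo_step.
Qed.

End Step.

Lemma density_Yo_ge V :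
  (density (Yo set0) ^+ (2 ^ #|V|) / cardA%:R ^+ (3 ^ #|V|) <= density (Yo V))%R.
Proof.
move cardV : #|V| => n; elim: n V cardV => [|n IH] V cardV.
  rewrite (cards0_eq cardV) expn0 !expr1 ler_pdivrMr ?ltr0n ?cardA_gt0 //.
  by rewrite ler_peMr ?ler1n ?cardA_gt0 ?density_ge0.
have [s sV] : exists s, s \in V by apply/set0Pn; rewrite -cards_eq0 cardV.
have cardT : #|V :\ s| = n by move: cardV; rewrite (cardsD1 s) sV => -[].
apply: le_trans (density_step sV); rewrite cardT.
set b := (density (Yo set0) ^+ (2 ^ n) / cardA%:R ^+ (3 ^ n))%R in IH *.
rewrite exp2_div_exp3S -/b.
have b_ge0 : (0 <= b)%R by rewrite divr_ge0 ?exprn_ge0 ?density_ge0.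
rewrite ler_wpM2r ?invr_ge0 ?exprn_ge0 //.
by apply: lerXn2r; rewrite ?nnegrE ?b_ge0 ?density_ge0 ?(IH _ cardT).
Qed.

End AdditiveRestrictiveSystem.

Local Open Scope ring_scope.

Theorem proposition3p2 (d : nat) (X : 'I_d -> finType)
  (A : {set 'I_d} -> finZmodType)
  (Y Yo : forall S : {set 'I_d}, {set Xbar X S})
  (F : forall S : {set 'I_d}, Xbar X S -> A S) :
  @additive_restrictive_system d X A Y Yo F ->
  let delta := density (Yo set0) in
  let cardA := (\max_(S : {set 'I_d}) #|A S|)%N in
  forall S : {set 'I_d},
    delta ^+ (2 ^ #|S|) / (cardA%:R) ^+ (3 ^ #|S|) <= density (Yo S).
Proof.
case=> Yo_sub_Y [F_eq0 [Y_faces F_add]] delta cardA S.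
exact: density_Yo_ge Yo_sub_Y F_eq0 Y_faces F_add S.
Qed.
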